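(* Let $L$ be a subspace of $\mathbb{C}^n$ and suppose that $L$ is the (vector space) direct sum of subspaces $L_1,\dots,L_p$. For each $i$ let $F_i$ be the face of the state space $K_n$ of $\mathcal{B}(\mathbb{C}^n)$ associated with $L_i$. Then the convex hull of $F_1,\dots,F_p$ is the direct convex sum of $F_1,\dots,F_p$. In particular, if $x_1,\dots,x_p$ are linearly independent unit vectors in $\mathbb{C}^n$, then the vector states $\omega_{x_1},\dots,\omega_{x_p}$ are linearly independent (over $\mathbb{R}$) and their convex hull is a simplex.
   Context: For a unit vector $x\in\mathbb{C}^n$, $\omega_x$ denotes the vector state $\omega_x(A)=(Ax,x)$ on $\mathcal{B}(\mathbb{C}^n)$; $K_n$ denotes the convex set of states on $\mathcal{B}(\mathbb{C}^n)$. The face of $K_n$ associated with a subspace $M\subseteq\mathbb{C}^n$ (with orthogonal projection $Q$ onto $M$) is $F_Q=\{\omega\in K_n:\omega(Q)=1\}$; it is the convex hull of the vector states $\omega_x$ with $x\in M$ a unit vector. A convex set $C$ is the direct convex sum of convex subsets $C_1,\dots,C_p$ if each $\omega\in C$ can be written uniquely as $\omega=\sum_{i\in I}\lambda_i\omega_i$ with $I\subseteq\{1,\dots,p\}$, $\lambda_i>0$, $\sum_{i\in I}\lambda_i=1$, $\omega_i\in C_i$. A finite-dimensional convex set is a simplex if it is the direct convex sum of finitely many points. *)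

(* The complex field is abstracted as an arbitrary
   numClosedFieldType C (e.g. algC). *)
From HB Require Import structures.
From mathcomp Require Import all_boot all_order all_algebra.
Set Implicit Arguments. Unset Strict Implicit. Unset Printing Implicit Defensive.
Import Order.TTheory GRing.Theory Num.Theory.
Local Open Scope ring_scope.

(* Linear functionals on B(C^n) = 'M[C]_n.  Matrices act on column vectors;
   vectors of C^n are represented as row vectors x : 'rV_n, acting via x^T. *)
Definition functional (C : numClosedFieldType) (n : nat) := 'M[C]_n -> C.

Definition adjmx (C : numClosedFieldType) (m k : nat) (B : 'M[C]_(m, k)) : 'M[C]_(k, m) :=
  map_mx (@Num.conj C) B^T.

Definition is_state (C : numClosedFieldType) (n : nat) (w : functional C n) : Prop :=
  (forall (a : C) (A B : 'M[C]_n), w (a *: A + B) = a * w A + w B) /\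
  (forall B : 'M[C]_n, 0 <= w (adjmx B *m B)) /\
  w 1%:M = 1.

Definition vstate (C : numClosedFieldType) (n : nat) (x : 'rV[C]_n) : functional C n :=
  fun A => (map_mx (@Num.conj C) x *m A *m x^T) 0 0.

Definition unit_vector (C : numClosedFieldType) (n : nat) (x : 'rV[C]_n) : Prop :=
  (map_mx (@Num.conj C) x *m x^T) 0 0 = 1.

(* Q is the orthogonal projection onto the subspace M (row space of M) *)
Definition is_orth_proj (C : numClosedFieldType) (n : nat) (Q M : 'M[C]_n) : Prop :=
  adjmx Q = Q /\ Q *m Q = Q /\
  (forall x : 'rV[C]_n, (Q *m x^T == x^T) = (x <= M)%MS).

Definition face (C : numClosedFieldType) (n : nat) (M : 'M[C]_n) (w : functional C n) : Prop :=
  is_state w /\ exists Q : 'M[C]_n, is_orth_proj Q M /\ w Q = 1.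

Definition conv_hull (C : numClosedFieldType) (n p : nat)
  (Cs : 'I_p -> functional C n -> Prop) (w : functional C n) : Prop :=
  exists (m : nat) (mu : 'I_m -> C) (nu : 'I_m -> functional C n),
    (forall k, 0 <= mu k) /\ \sum_(k < m) mu k = 1 /\
    (forall k, exists i, Cs i (nu k)) /\
    (forall A, w A = \sum_(k < m) mu k * nu k A).

Definition convex_rep (C : numClosedFieldType) (n p : nat)
  (Cs : 'I_p -> functional C n -> Prop) (I : {set 'I_p}) (lam : 'I_p -> C)
  (ws : 'I_p -> functional C n) (w : functional C n) : Prop :=
  (forall i, i \in I -> 0 < lam i /\ Cs i (ws i)) /\
  \sum_(i in I) lam i = 1 /\
  (forall A, w A = \sum_(i in I) lam i * ws i A).

Definition direct_convex_sum (C : numClosedFieldType) (n p : nat)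
  (S : functional C n -> Prop) (Cs : 'I_p -> functional C n -> Prop) : Prop :=
  (forall I lam ws w, convex_rep Cs I lam ws w -> S w) /\
  (forall w, S w ->
     (exists I lam ws, convex_rep Cs I lam ws w) /\
     (forall I lam ws I' lam' ws',
        convex_rep Cs I lam ws w -> convex_rep Cs I' lam' ws' w ->
        I = I' /\ forall i, i \in I -> lam i = lam' i /\ forall A, ws i A = ws' i A)).

Definition simplex (C : numClosedFieldType) (n : nat) (S : functional C n -> Prop) : Prop :=
  exists (m : nat) (pts : 'I_m -> functional C n),
    direct_convex_sum S (fun i w => forall A, w A = pts i A).

From HB Require Import structures.
From Stdlib Require ClassicalEpsilon.
From mathcomp Require Import all_boot all_order all_algebra.
Set Implicit Arguments. Unset Strict Implicit. Unset Printing Implicit Defensive.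
Import Order.TTheory GRing.Theory Num.Theory.
Local Open Scope ring_scope.

(* Both parts of the theorem are instances of one abstract criterion.
   Let C_1, ..., C_p be convex sets of unital functionals on B(C^n) and
   suppose there are "compressions" c_1, ..., c_p of B(C^n) that separate
   them: v (c_i A) = v A if v lies in C_i, and v (c_i A) = 0 if v lies in C_j
   with j <> i.  Then the convex hull of the C_i is their direct convex sum
   (direct_convex_sum_criterion): applying a decomposition w = sum lam_j w_j
   to c_i 1 recovers lam_i, and applying it to c_i A recovers w_i A.
   For the faces F_i attached to a direct sum L_1 + ... + L_p, the
   compression is A |-> E_i^* A E_i, where E_i (dir_proj) is the transpose of
   the projection onto L_i along the other summands; this relies on the fact
   that a state with w Q = 1 satisfies w A = w (Q A Q) (state_compress, a
   Cauchy-Schwarz argument).  For vector states of independent unit vectors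
   x_i, the compression is A |-> G_i^* A G_i where G_i x_j = [i = j] x_i
   (sel), built from a left inverse of the matrix with rows x_i; the same
   compressions also give the linear independence of the vector states. *)

Section ConvexSumOfStates.
Variable C : numClosedFieldType.

Section Adjoint.

Lemma adjmxM m k l (A : 'M[C]_(m, k)) (B : 'M[C]_(k, l)) :
  adjmx (A *m B) = adjmx B *m adjmx A.
Proof. by rewrite /adjmx trmx_mul map_mxM. Qed.

Lemma adjmxK m k (A : 'M[C]_(m, k)) : adjmx (adjmx A) = A.
Proof. by apply/matrixP=> i j; rewrite !mxE conjCK. Qed.

Lemma adjmxD m k (A B : 'M[C]_(m, k)) : adjmx (A + B) = adjmx A + adjmx B.
Proof. by apply/matrixP=> i j; rewrite !mxE rmorphD. Qed.

Lemma adjmxN m k (A : 'M[C]_(m, k)) : adjmx (- A) = - adjmx A.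
Proof. by apply/matrixP=> i j; rewrite !mxE rmorphN. Qed.

Lemma adjmxZ m k a (A : 'M[C]_(m, k)) : adjmx (a *: A) = a^* *: adjmx A.
Proof. by apply/matrixP=> i j; rewrite !mxE rmorphM. Qed.

Lemma adjmx0 m k : adjmx (0 : 'M[C]_(m, k)) = 0.
Proof. by apply/matrixP=> i j; rewrite !mxE rmorph0. Qed.

Lemma adjmx1 k : adjmx (1%:M : 'M[C]_k) = 1%:M.
Proof. by rewrite /adjmx tr_scalar_mx map_scalar_mx /= rmorph1. Qed.

End Adjoint.

Section LinearFunctional.
Definition linear_fun n (w : functional C n) : Prop :=
  forall (a : C) (A B : 'M[C]_n), w (a *: A + B) = a * w A + w B.

Variables (n : nat) (w : functional C n).
Hypothesis w_lin : linear_fun w.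

Lemma linD A B : w (A + B) = w A + w B.
Proof. by rewrite -{1}(scale1r A) w_lin mul1r. Qed.

Lemma lin0 : w 0 = 0.
Proof. by apply: (addrI (w 0)); rewrite -linD !addr0. Qed.

Lemma linZ a A : w (a *: A) = a * w A.
Proof. by rewrite -(addr0 (a *: A)) w_lin lin0 addr0. Qed.

Lemma linB A B : w (A - B) = w A - w B.
Proof. by rewrite linD -scaleN1r linZ mulN1r. Qed.

End LinearFunctional.

(* A real quadratic s |-> s r + s^2 c (c >= 0) that is nonnegative on the
   reals has vanishing linear coefficient: try s = - r / (c + 1). *)
Lemma real_quadratic_ge0 (r c : C) : 0 <= c ->
  (forall s, s \is Num.real -> 0 <= s * r + s * s * c) -> r = 0.
Proof.
move=> c_ge0 H.
have r_real : r \is Num.real.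
  have := H 1 (rpred1 _); rewrite !mul1r => h.
  by rewrite -(addrK c r) rpredB // ger0_real.
have d_gt0 : 0 < c + 1 by apply: ltr_wpDl.
set u := r / (c + 1).
have u_real : u \is Num.real by rewrite rpredM // realV gtr0_real.
have r_eq : r = u * (c + 1) by rewrite /u divfK // gt_eqF.
have := H (- u); rewrite realN u_real => /(_ isT).
have -> : - u * r + - u * - u * c = - (u * u).
  by rewrite r_eq mulNr mulrNN mulrA mulrDr mulr1 opprD addrAC addNr add0r.
rewrite oppr_ge0 => uu_le0.
have : u * u == 0 by rewrite eq_le uu_le0 -expr2 -realEsqr.
by rewrite mulf_eq0 orbb => /eqP u0; rewrite r_eq u0 mul0r.
Qed.

(* The complex version: nonnegativity of t |-> t b + t^* a + |t|^2 c on C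
   forces a = b = 0 (use t real, then t purely imaginary). *)
Lemma complex_quadratic_ge0 (a b c : C) : 0 <= c ->
  (forall t, 0 <= t * b + t^* * a + t^* * t * c) -> a = 0 /\ b = 0.
Proof.
move=> c_ge0 H.
have sum0 : a + b = 0.
  apply: (real_quadratic_ge0 c_ge0) => s s_real; have := H s.
  by rewrite conj_Creal // (addrC (s * b)) -mulrDr.
have diff0 : 'i * (b - a) = 0.
  apply: (real_quadratic_ge0 c_ge0) => s s_real; have := H ('i * s).
  rewrite rmorphM /= conjCi conj_Creal //.
  have -> : - 'i * s * ('i * s) = s * s.
    by rewrite mulrACA mulNr -expr2 sqrCi opprK mul1r.
  by rewrite !mulNr -mulrBr (mulrC 'i) -!mulrA.
have /eqP : b - a = 0.
  by move: diff0 => /eqP; rewrite mulf_eq0 (negbTE (neq0Ci _)) => /eqP.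
rewrite subr_eq0 => /eqP ba.
by move: sum0; rewrite ba -mulr2n => /eqP; rewrite mulrn_eq0 => /eqP ->.
Qed.

(* Cauchy-Schwarz for positive functionals: if w (P^* P) = 0 then w kills
   every B^* P and P^* B.  Expand w ((P + t B)^* (P + t B)) >= 0. *)
Lemma positive_null_annihilates n (w : functional C n) (P : 'M[C]_n) :
  linear_fun w -> (forall B : 'M[C]_n, 0 <= w (adjmx B *m B)) ->
  w (adjmx P *m P) = 0 ->
  forall B : 'M[C]_n, w (adjmx B *m P) = 0 /\ w (adjmx P *m B) = 0.
Proof.
move=> w_lin w_pos wP0 B.
apply: (complex_quadratic_ge0 (c := w (adjmx B *m B))) => // t.
have := w_pos (P + t *: B).
rewrite adjmxD adjmxZ mulmxDl !mulmxDr -!scalemxAl -!scalemxAr scalerA.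
by rewrite !(linD w_lin) !(linZ w_lin) wP0 add0r addrA (mulrC t^*).
Qed.

(* A state taking the value 1 on a self-adjoint idempotent Q only sees the
   compression Q A Q: it vanishes on everything involving 1 - Q. *)
Lemma state_compress n (w : functional C n) (Q : 'M[C]_n) : is_state w ->
  adjmx Q = Q -> Q *m Q = Q -> w Q = 1 -> forall A, w A = w (Q *m A *m Q).
Proof.
move=> [w_lin [w_pos w1]] adjQ QQ wQ A.
set P := 1%:M - Q.
have adjP : adjmx P = P by rewrite /P adjmxD adjmxN adjmx1 adjQ.
have PP : P *m P = P by rewrite /P mulmxBl !mulmxBr !mul1mx mulmx1 QQ subrr subr0.
have wP0 : w (adjmx P *m P) = 0 by rewrite adjP PP (linB w_lin) w1 wQ subrr.
have killR X : w (X *m P) = 0.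
  by have [h _] := positive_null_annihilates w_lin w_pos wP0 (adjmx X);
     rewrite adjmxK in h.
have killL X : w (P *m X) = 0.
  by have [_ h] := positive_null_annihilates w_lin w_pos wP0 X; rewrite adjP in h.
have QP : Q + P = 1%:M by rewrite /P addrC subrK.
rewrite -{1}(mulmx1 A) -QP mulmxDr (linD w_lin) killR addr0.
by rewrite -{1}(mul1mx (A *m Q)) -QP mulmxDl (linD w_lin) killL addr0 mulmxA.
Qed.

Section OrthogonalProjection.
Variables (n : nat) (Q M : 'M[C]_n).
Hypothesis hQ : is_orth_proj Q M.

Lemma orth_proj_fix k (Y : 'M[C]_(k, n)) : (Y <= M)%MS -> Q *m Y^T = Y^T.
Proof.
have [_ [_ fixQ]] := hQ => YM; apply: trmx_inj; rewrite trmx_mul trmxK.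
apply/row_matrixP => i; rewrite row_mul; apply: trmx_inj; rewrite trmx_mul trmxK.
by apply/eqP; rewrite fixQ (submx_trans (row_sub i Y) YM).
Qed.

Lemma orth_proj_range : (Q^T <= M)%MS.
Proof.
have [_ [QQ fixQ]] := hQ; apply/row_subP => i.
by rewrite -fixQ tr_row trmxK colE mulmxA QQ.
Qed.

End OrthogonalProjection.

Lemma orth_proj_comp n (Q Q' M : 'M[C]_n) :
  is_orth_proj Q M -> is_orth_proj Q' M -> Q *m Q' = Q'.
Proof.
by move=> hQ hQ'; rewrite -[Q']trmxK (orth_proj_fix hQ) // orth_proj_range.
Qed.

(* The face of M does not depend on the choice of the projection onto M. *)
Lemma face_proj1 n (M Q : 'M[C]_n) v : face M v -> is_orth_proj Q M -> v Q = 1.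
Proof.
move=> [v_state [Q' [hQ' vQ']]] hQ; have [adjQ' [QQ' _]] := hQ'.
by rewrite (state_compress v_state adjQ' QQ' vQ') -mulmxA (orth_proj_comp hQ hQ') QQ'.
Qed.

Lemma face_compress n (M Q : 'M[C]_n) v : face M v -> is_orth_proj Q M ->
  forall A, v A = v (Q *m A *m Q).
Proof.
move=> fv hQ; have [adjQ [QQ _]] := hQ.
exact: state_compress fv.1 adjQ QQ (face_proj1 fv hQ).
Qed.

Section Convexity.
Variable n : nat.

(* A set of functionals closed under convex combinations; members are only
   required for the terms carrying a positive weight. *)
Definition convex_set (S : functional C n -> Prop) : Prop :=
  forall m (mu : 'I_m -> C) (nu : 'I_m -> functional C n),
    (forall k, 0 <= mu k) -> \sum_(k < m) mu k = 1 ->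
    (forall k, 0 < mu k -> S (nu k)) ->
    S (fun A => \sum_(k < m) mu k * nu k A).

Lemma pos_weight_exists m (mu : 'I_m -> C) :
  (forall k, 0 <= mu k) -> \sum_(k < m) mu k = 1 -> exists k, 0 < mu k.
Proof.
move=> mu_ge0 mu_sum1; case: (pickP (fun k => 0 < mu k)) => [k mu_k|none].
  by exists k.
move: mu_sum1; rewrite big1 => [/eqP|k _]; first by rewrite eq_sym oner_eq0.
by have := mu_ge0 k; rewrite le0r none orbF => /eqP.
Qed.

Lemma weighted_eq (a x y : C) : 0 <= a -> (0 < a -> x = y) -> a * x = a * y.
Proof. by rewrite le0r => /orP[/eqP ->|a_gt0 /(_ a_gt0) ->]; rewrite ?mul0r. Qed.

Lemma point_convex (f : functional C n) : convex_set (fun v => forall A, v A = f A).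
Proof.
move=> m mu nu mu_ge0 mu_sum1 nu_in A.
have E k : mu k * nu k A = mu k * f A by apply: weighted_eq => // /nu_in ->.
by rewrite (eq_bigr _ (fun k _ => E k)) -mulr_suml mu_sum1 mul1r.
Qed.

Lemma face_convex (M : 'M[C]_n) : convex_set (face M).
Proof.
move=> m mu nu mu_ge0 mu_sum1 nu_in.
have [k0 mu_k0] := pos_weight_exists mu_ge0 mu_sum1.
have [_ [Q [hQ _]]] := nu_in k0 mu_k0.
have combo (F G : 'I_m -> C) : (forall k, 0 < mu k -> F k = G k) ->
    \sum_(k < m) mu k * F k = \sum_(k < m) mu k * G k.
  by move=> FG; apply: eq_bigr => k _; apply: weighted_eq => // /FG.
have combo1 (F : 'I_m -> C) : (forall k, 0 < mu k -> F k = 1) ->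
    \sum_(k < m) mu k * F k = 1.
  by move=> F1; rewrite (combo _ (fun=> 1)) //= -mulr_suml mu_sum1 mulr1.
split; [split; [|split]|].
- move=> a A B; rewrite (combo _ (fun k => a * nu k A + nu k B)); last first.
    by move=> k /nu_in [[lin _] _]; apply: lin.
  by rewrite mulr_sumr -big_split; apply: eq_bigr => k _; rewrite mulrDr mulrCA.
- move=> B; apply: sumr_ge0 => k _; have [mu_k|] := boolP (0 < mu k).
    by have [[_ [pos _]] _] := nu_in k mu_k; rewrite mulr_ge0 // ltW.
  by rewrite lt0r (mu_ge0 k) andbT negbK => /eqP ->; rewrite mul0r.
- by apply: combo1 => k /nu_in [[_ [_ ->]] _].
- by exists Q; split => //; apply: combo1 => k /nu_in fk; apply: face_proj1 fk hQ.
Qed.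

End Convexity.

Section DirectConvexSumCriterion.
Variables (n p : nat) (Cs : 'I_p -> functional C n -> Prop).
Variable compress : 'I_p -> 'M[C]_n -> 'M[C]_n.
Hypothesis Cs_convex : forall i, convex_set (Cs i).
Hypothesis Cs_compress : forall i j v, Cs j v ->
  forall A, v (compress i A) = if i == j then v A else 0.
Hypothesis Cs_unital : forall i v, Cs i v -> v 1%:M = 1.

Lemma convex_rep_compress I lam ws w : convex_rep Cs I lam ws w ->
  forall i A, w (compress i A) = if i \in I then lam i * ws i A else 0.
Proof.
move=> [HI [_ Hw]] i A; rewrite Hw.
have E j : j \in I -> lam j * ws j (compress i A) = if j == i then lam i * ws i A else 0.
  move=> jI; rewrite (Cs_compress i (HI j jI).2) eq_sym.
  by case: eqP => [->|_]; rewrite ?mulr0.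
rewrite (eq_bigr _ E); case: (boolP (i \in I)) => iI.
  rewrite (bigD1 i iI) /= eqxx big1 ?addr0 // => j /andP[_ ji].
  by rewrite (negbTE ji).
by apply: big1 => j jI; case: eqP => // ji; rewrite -ji jI in iI.
Qed.

Lemma convex_rep_unique I lam ws I' lam' ws' w :
  convex_rep Cs I lam ws w -> convex_rep Cs I' lam' ws' w ->
  I = I' /\ forall i, i \in I -> lam i = lam' i /\ forall A, ws i A = ws' i A.
Proof.
move=> r r'.
have E i A : (if i \in I then lam i * ws i A else 0) =
             (if i \in I' then lam' i * ws' i A else 0).
  by rewrite -(convex_rep_compress r) -(convex_rep_compress r').
have lam_eq i : i \in I -> i \in I' /\ lam i = lam' i.
  move=> iI; have := E i 1%:M; rewrite iI (Cs_unital (r.1 i iI).2) mulr1.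
  case: ifP => iI'; first by rewrite (Cs_unital (r'.1 i iI').2) mulr1.
  by move=> lam0; have := (r.1 i iI).1; rewrite lam0 ltxx.
have in_I i : i \in I' -> i \in I.
  move=> iI'; have := E i 1%:M; rewrite iI' (Cs_unital (r'.1 i iI').2) mulr1.
  case: ifP => // _ lam0.
  by have := (r'.1 i iI').1; rewrite -lam0 ltxx.
split; first by apply/setP => i; apply/idP/idP => [/lam_eq[]|/in_I].
move=> i iI; have [iI' lam_i] := lam_eq i iI; split => // A.
have := E i A; rewrite iI iI' -lam_i; apply: mulfI.
by rewrite gt_eqF // (r.1 i iI).1.
Qed.

Lemma convex_rep_hull I lam ws w : convex_rep Cs I lam ws w -> conv_hull Cs w.
Proof.
move=> [HI [lam_sum1 Hw]].
case: (pickP (mem I)) => [j0 j0I|none]; last first.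
  by move: lam_sum1; rewrite big_pred0 // => /esym/eqP; rewrite oner_eq0.
exists p, (fun i => if i \in I then lam i else 0),
  (fun i => ws (if i \in I then i else j0)); split; [|split; [|split]].
- by move=> k; case: ifP => // kI; apply: ltW; exact: (HI k kI).1.
- by rewrite -big_mkcond.
- move=> k; exists (if k \in I then k else j0).
  by case: ifP => kI; [exact: (HI k kI).2|exact: (HI j0 j0I).2].
- move=> A; rewrite Hw big_mkcond; apply: eq_bigr => i _.
  by case: ifP => _; rewrite ?mul0r.
Qed.

(* Conversely, grouping the terms of a convex combination by the set they
   come from yields a decomposition; this uses the convexity of each Cs i. *)
Lemma hull_convex_rep w : conv_hull Cs w -> exists I lam ws, convex_rep Cs I lam ws w.
Proof.
move=> [m [mu [nu [mu_ge0 [mu_sum1 [nu_in Hw]]]]]].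
have [idx idxP] := ClassicalEpsilon.choice (fun k i => Cs i (nu k)) nu_in.
pose lam i := \sum_(k < m | idx k == i) mu k.
pose wt i k := if idx k == i then mu k / lam i else 0.
pose ws i A := \sum_(k < m) wt i k * nu k A.
have lam_ge0 i : 0 <= lam i by apply: sumr_ge0.
have lam_ws i A : lam i != 0 ->
    lam i * ws i A = \sum_(k < m | idx k == i) mu k * nu k A.
  move=> lam_i; rewrite mulr_sumr [RHS]big_mkcond; apply: eq_bigr => k _.
  rewrite /wt; case: ifP => _; last by rewrite mul0r mulr0.
  by rewrite mulrA mulrCA divff // mulr1.
have lam0 i (F : 'I_m -> C) : lam i = 0 -> \sum_(k < m | idx k == i) mu k * F k = 0.
  move=> lam_i; apply: big1 => k ki.
  by rewrite (psumr_eq0P (fun k _ => mu_ge0 k) lam_i ki) mul0r.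
exists [set i | lam i != 0], lam, ws; split; [|split].
- move=> i; rewrite inE => lam_i; split; first by rewrite lt0r lam_i lam_ge0.
  apply: Cs_convex.
  + by move=> k; rewrite /wt; case: ifP => // _; rewrite divr_ge0.
  + by rewrite /wt -big_mkcond -mulr_suml divff.
  + by move=> k; rewrite /wt; case: eqP => [<- _|_]; [exact: idxP|rewrite ltxx].
- rewrite -mu_sum1 (partition_big idx xpredT) //= big_mkcond /=.
  by apply: eq_bigr => i _; rewrite inE; case: eqP.
- move=> A; rewrite Hw (partition_big idx xpredT) //= [RHS]big_mkcond /=.
  apply: eq_bigr => i _; rewrite inE; case: eqP => [lam_i|/eqP lam_i] /=.
    exact: lam0.
  by rewrite lam_ws.
Qed.

Lemma direct_convex_sum_criterion : direct_convex_sum (conv_hull Cs) Cs.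
Proof.
split; first exact: convex_rep_hull.
move=> w w_hull; split; first exact: hull_convex_rep.
by move=> I lam ws I' lam' ws'; apply: convex_rep_unique.
Qed.

End DirectConvexSumCriterion.

Section FacesOfDirectSum.
Variables (n p : nat) (Ls : 'I_p -> 'M[C]_n).
Hypothesis Ls_direct : mxdirect (\sum_(i < p) Ls i).

Definition dir_proj i : 'M[C]_n := (proj_mx (Ls i) (\sum_(j | j != i) Ls j)%MS)^T.

Lemma dir_proj_orth_proj i j Q : is_orth_proj Q (Ls j) ->
  dir_proj i *m Q = if i == j then Q else 0.
Proof.
move=> hQ; have Ls_i := (mxdirect_sumsP Ls_direct) i isT.
rewrite /dir_proj -[Q]trmxK -trmx_mul; case: eqP => [ij|ne].
  by rewrite proj_mx_id // ij (orth_proj_range hQ).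
rewrite proj_mx_0 ?trmx0 //; apply: submx_trans (orth_proj_range hQ) _.
by apply: (sumsmx_sup j) => //; apply/eqP => ji; apply: ne.
Qed.

Lemma face_dir_compress i j v : face (Ls j) v -> forall A,
  v (adjmx (dir_proj i) *m A *m dir_proj i) = if i == j then v A else 0.
Proof.
move=> fv A; have [[v_lin _] [Q [hQ _]]] := fv; have [adjQ _] := hQ.
rewrite (face_compress fv hQ).
have -> : Q *m (adjmx (dir_proj i) *m A *m dir_proj i) *m Q =
          adjmx (dir_proj i *m Q) *m A *m (dir_proj i *m Q).
  by rewrite adjmxM adjQ !mulmxA.
rewrite (dir_proj_orth_proj i hQ).
case: eqP => _; last by rewrite adjmx0 mul0mx mulmx0 (lin0 v_lin).
by rewrite adjQ -(face_compress fv hQ).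
Qed.

Lemma faces_direct_convex_sum :
  direct_convex_sum (conv_hull (fun i => face (Ls i))) (fun i => face (Ls i)).
Proof.
apply: (direct_convex_sum_criterion (compress := fun i A =>
          adjmx (dir_proj i) *m A *m dir_proj i)).
- by move=> i; apply: face_convex.
- exact: face_dir_compress.
- by move=> i v [[_ [_ ->]] _].
Qed.

End FacesOfDirectSum.

Section IndependentVectorStates.
Variables (n p : nat) (x : 'I_p -> 'rV[C]_n) (R : 'M[C]_(n, p)).
Hypothesis x_left_inv : (\matrix_(i < p) x i) *m R = 1%:M.
Hypothesis x_unit : forall i, unit_vector (x i).

Definition sel i : 'M[C]_n := (x i)^T *m (col i R)^T.

Lemma x_dual i j : x j *m col i R = ((j == i)%:R)%:M.
Proof.
apply/matrixP => a b; rewrite !ord1.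
have := congr1 (fun M : 'M[C]_p => M j i) x_left_inv; rewrite !mxE => <-.
by apply: eq_bigr => k _; rewrite !mxE.
Qed.

Lemma sel_x i j : sel i *m (x j)^T = (j == i)%:R *: (x i)^T.
Proof. by rewrite /sel -mulmxA -trmx_mul x_dual tr_scalar_mx mul_mx_scalar. Qed.

Lemma vstate_conj (y : 'rV[C]_n) (G A : 'M[C]_n) :
  vstate y (adjmx G *m A *m G) = (adjmx (G *m y^T) *m A *m (G *m y^T)) 0 0.
Proof. by rewrite /vstate adjmxM !mulmxA /adjmx trmxK. Qed.

Lemma vstate_sel_compress i j A :
  vstate (x j) (adjmx (sel i) *m A *m sel i) = if i == j then vstate (x j) A else 0.
Proof.
rewrite vstate_conj sel_x; case: (eqVneq i j) => [->|ne].
  by rewrite scale1r /vstate /adjmx trmxK.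
by rewrite scale0r adjmx0 !mul0mx mxE.
Qed.

Lemma vstate_unital i : vstate (x i) 1%:M = 1.
Proof. by rewrite /vstate mulmx1 (x_unit i). Qed.

Lemma vector_states_direct_convex_sum :
  direct_convex_sum (conv_hull (fun i w => forall A, w A = vstate (x i) A))
                    (fun i w => forall A, w A = vstate (x i) A).
Proof.
apply: (direct_convex_sum_criterion (compress := fun i A =>
          adjmx (sel i) *m A *m sel i)).
- by move=> i; apply: point_convex.
- by move=> i j v v_eq A; rewrite !v_eq vstate_sel_compress.
- by move=> i v ->; apply: vstate_unital.
Qed.

(* Compressing a vanishing combination by sel i isolates its i-th coefficient;
   this gives independence even over C, not only over the reals. *)
Lemma vector_states_independent (c : 'I_p -> C) :
  (forall A, \sum_(i < p) c i * vstate (x i) A = 0) -> forall i, c i = 0.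
Proof.
move=> H i; have := H (adjmx (sel i) *m 1%:M *m sel i).
rewrite (bigD1 i) //= big1 ?addr0 => [|j ji]; last first.
  by rewrite vstate_sel_compress eq_sym (negbTE ji) mulr0.
by rewrite vstate_sel_compress eqxx vstate_unital mulr1.
Qed.

End IndependentVectorStates.

End ConvexSumOfStates.

Theorem mainTheorem1 (C : numClosedFieldType) :
  (forall (n p : nat) (L : 'M[C]_n) (Ls : 'I_p -> 'M[C]_n),
     (L == \sum_(i < p) Ls i)%MS ->
     mxdirect (\sum_(i < p) Ls i) ->
     direct_convex_sum (conv_hull (fun i => face (Ls i)))
                       (fun i => face (Ls i))) /\
  (forall (n p : nat) (x : 'I_p -> 'rV[C]_n),
     row_free (\matrix_(i < p) x i) ->
     (forall i, unit_vector (x i)) ->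
     (forall c : 'I_p -> C, (forall i, c i \is Num.real) ->
        (forall A, \sum_(i < p) c i * vstate (x i) A = 0) ->
        forall i, c i = 0) /\
     simplex (conv_hull (fun i w => forall A, w A = vstate (x i) A))).
Proof.
split; first by move=> n p L Ls _; apply: faces_direct_convex_sum.
move=> n p x x_free x_unit; have [R x_left_inv] := row_freeP x_free.
split; first by move=> c _; apply: (vector_states_independent x_left_inv x_unit).
by exists p, (fun i => vstate (x i)); exact: (vector_states_direct_convex_sum x_left_inv x_unit).
Qed.
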